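(* Let $G$ be a two-player stage game with $|V_1^{p,p}|>1$ and $|V_2^{p,p}|>1$. If $G\in\mathcal{G}_{LS}^{m,p}$, then $G\in\mathcal{G}_{LS}^{p,p}$.
   Context: A two-player stage game $G$ has finite nonempty action sets $A_1,A_2$ and payoffs $u_1,u_2:A_1\times A_2\to\mathbb{R}$, extended to mixed strategies by expectation. $G(T)$ is the $T$-round repetition with realized actions observed each round and payoffs the expected sum of stage payoffs; an SPE of $G(T)$ is a strategy profile whose continuation after every history of length $k<T$ is a Nash equilibrium of $G(T-k)$. Regimes: pure-pure ($p,p$): both players restricted to actions (in the stage game and in every round, including deviations); mixed-pure ($m,p$): player 1 may mix, player 2 uses only actions; mixed-mixed ($m,m$): both may mix. For regime $r$, $\mathrm{Nash}^r(G)$ is the set of stage-game profiles available in $r$ from which no player can profitably deviate unilaterally to a strategy available in $r$, and $V_i^r=\{u_i(\sigma):\sigma\in\mathrm{Nash}^r(G)\}$. Locally suboptimal behavior occurs in an SPE $\mu$ of $G(T)$ (regime $r$) if for some history $h$ of length $k<T$, $(\mu_1(h),\mu_2(h))\notin\mathrm{Nash}^r(G)$. $\mathcal{G}_{LS}^r$ is the set of stage games $G$ for which there exist $T\ge1$ and an SPE of $G(T)$ in regime $r$ in which locally suboptimal behavior occurs. *)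

From HB Require Import structures.
From mathcomp Require Import all_boot all_order all_algebra.
From mathcomp Require Import reals.
Set Implicit Arguments. Unset Strict Implicit. Unset Printing Implicit Defensive.
Import Order.TTheory GRing.Theory Num.Theory.
Local Open Scope ring_scope.

Section RepeatedGames.
Variable R : realType.

Definition is_dist (A : finType) (p : {ffun A -> R}) : Prop :=
  (forall a, 0 <= p a) /\ \sum_(a : A) p a = 1.

(* A pure action, seen as the point-mass mixed strategy. *)
Definition dirac (A : finType) (a : A) : {ffun A -> R} :=
  [ffun b => (b == a)%:R].

(* Strategies available to a player: any mixed strategy if the player may
   mix ([mix = true]), otherwise only (point masses at) actions. *)
Definition avail (A : finType) (mix : bool) (p : {ffun A -> R}) : Prop :=
  if mix then is_dist p else exists a : A, p = dirac a.

(* A regime: (player 1 may mix, player 2 may mix). *)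
Definition regime := (bool * bool)%type.
Definition reg_pp : regime := (false, false).
Definition reg_mp : regime := (true, false).
Definition reg_mm : regime := (true, true).

Variables (A1 A2 : finType) (u1 u2 : A1 -> A2 -> R).

Definition Eu (f : A1 -> A2 -> R) (p1 : {ffun A1 -> R}) (p2 : {ffun A2 -> R}) : R :=
  \sum_(a1 : A1) \sum_(a2 : A2) p1 a1 * p2 a2 * f a1 a2.

Definition stageNash (r : regime) (p1 : {ffun A1 -> R}) (p2 : {ffun A2 -> R}) : Prop :=
  [/\ avail r.1 p1, avail r.2 p2,
      (forall q1, avail r.1 q1 -> Eu u1 q1 p2 <= Eu u1 p1 p2) &
      (forall q2, avail r.2 q2 -> Eu u2 p1 q2 <= Eu u2 p1 p2)].

Definition V1 (r : regime) (v : R) : Prop :=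
  exists p1 p2, stageNash r p1 p2 /\ v = Eu u1 p1 p2.
Definition V2 (r : regime) (v : R) : Prop :=
  exists p1 p2, stageNash r p1 p2 /\ v = Eu u2 p1 p2.

Definition card_gt1 (S : R -> Prop) : Prop :=
  exists v w, v <> w /\ S v /\ S w.

(* Histories of realized action profiles; behaviour strategies. *)
Definition history := seq (A1 * A2).
Definition strat1 := history -> {ffun A1 -> R}.
Definition strat2 := history -> {ffun A2 -> R}.

Definition valid1 (r : regime) (s : strat1) : Prop := forall h, avail r.1 (s h).
Definition valid2 (r : regime) (s : strat2) : Prop := forall h, avail r.2 (s h).

Fixpoint value (f : A1 -> A2 -> R) (s1 : strat1) (s2 : strat2) (h : history)
    (n : nat) : R :=
  match n with
  | 0 => 0
  | n'.+1 => \sum_(a1 : A1) \sum_(a2 : A2)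
              s1 h a1 * s2 h a2 * (f a1 a2 + value f s1 s2 (rcons h (a1, a2)) n')
  end.

Definition SPE (r : regime) (T : nat) (s1 : strat1) (s2 : strat2) : Prop :=
  [/\ valid1 r s1, valid2 r s2 &
      forall h : history, (size h < T)%N ->
        (forall t1, valid1 r t1 ->
           value u1 t1 s2 h (T - size h) <= value u1 s1 s2 h (T - size h)) /\
        (forall t2, valid2 r t2 ->
           value u2 s1 t2 h (T - size h) <= value u2 s1 s2 h (T - size h))].

Definition locally_suboptimal (r : regime) (T : nat) (s1 : strat1) (s2 : strat2) : Prop :=
  exists h : history, (size h < T)%N /\ ~ stageNash r (s1 h) (s2 h).

Definition in_GLS (r : regime) : Prop :=
  exists T : nat, (1 <= T)%N /\
    exists (s1 : strat1) (s2 : strat2), SPE r T s1 s2 /\ locally_suboptimal r T s1 s2.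

End RepeatedGames.

From mathcomp Require Import all_boot all_order all_algebra.
From mathcomp Require Import reals.
From mathcomp Require Import lra.
From Stdlib Require Import Classical.
Set Implicit Arguments. Unset Strict Implicit. Unset Printing Implicit Defensive.
Import Order.TTheory GRing.Theory Num.Theory.
Local Open Scope ring_scope.

(* Proof of Theorem 10: G in G_LS^{m,p} implies G in G_LS^{p,p} when both
   |V_i^{p,p}| > 1.
   1. If every pure profile of G were a pure Nash equilibrium, then against a
      fixed action of player 2 player 1 would be indifferent between all his
      actions, so every profile (mixed, pure) would be a stage equilibrium in
      regime (m,p) and no SPE could be locally suboptimal.  Hence some pure
      profile x = (x1, x2) is not a stage equilibrium.
   2. |V_i^{p,p}| > 1 yields pure equilibria lo_i, hi_i with u_i(lo_i) <
      u_i(hi_i); from them we pick a punishment equilibrium pun_i with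
      2 u_i(pun_i) < u_i(hi_1) + u_i(hi_2).
   3. Trigger profile in G(2k+1): play x in round 1; afterwards play a pure
      equilibrium depending only on the first-round profile and the round:
      alternate hi_1, hi_2, unless exactly player i deviated, in which case
      play pun_i forever.  Later deviations change nothing, so only round-1
      deviations matter; they gain a bounded amount once and lose
      k (u_i(hi_1) + u_i(hi_2) - 2 u_i(pun_i)) > 0, which deters them for k
      large (Archimedean property).  Round 1 is locally suboptimal. *)

Section StageGame.
Variables (R : realType) (A1 A2 : finType) (u1 u2 : A1 -> A2 -> R).

Lemma sum_dirac (A : finType) (b : A) (F : A -> R) :
  \sum_a dirac R b a * F a = F b.
Proof.
rewrite (bigD1 b) //= big1 ?addr0; first by rewrite ffunE eqxx mul1r.
by move=> a /negbTE nab; rewrite ffunE nab mul0r.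
Qed.

Lemma Eu_dirac_r (f : A1 -> A2 -> R) (p : {ffun A1 -> R}) (b : A2) :
  Eu f p (dirac R b) = \sum_a p a * f a b.
Proof.
apply: eq_bigr => a _; under eq_bigr => a2 _ do rewrite -mulrA.
by rewrite -big_distrr /= sum_dirac.
Qed.

Lemma Eu_dirac (f : A1 -> A2 -> R) (a : A1) (b : A2) :
  Eu f (dirac R a) (dirac R b) = f a b.
Proof. by rewrite Eu_dirac_r sum_dirac. Qed.

Definition pure_nash (c : A1 * A2) : Prop :=
  (forall a, u1 a c.2 <= u1 c.1 c.2) /\ (forall b, u2 c.1 b <= u2 c.1 c.2).

Lemma stageNash_pure_nash (a : A1) (b : A2) :
  stageNash u1 u2 reg_pp (dirac R a) (dirac R b) -> pure_nash (a, b).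
Proof.
case=> _ _ N1 N2; split => [a'|b'].
  by have := N1 (dirac R a') (ex_intro _ a' erefl); rewrite !Eu_dirac.
by have := N2 (dirac R b') (ex_intro _ b' erefl); rewrite !Eu_dirac.
Qed.

Lemma pp_value_pure (f : A1 -> A2 -> R) (v : R) :
  (exists p1 p2, stageNash u1 u2 reg_pp p1 p2 /\ v = Eu f p1 p2) ->
  exists c, pure_nash c /\ v = f c.1 c.2.
Proof.
case=> p1 [p2 [N ->]]; have [[a Ea] [b Eb] _ _] := N; subst p1 p2.
by exists (a, b); rewrite Eu_dirac; split => //; apply: stageNash_pure_nash.
Qed.

Lemma pure_nash_spread (f : A1 -> A2 -> R) :
  card_gt1 (fun v => exists p1 p2,
              stageNash u1 u2 reg_pp p1 p2 /\ v = Eu f p1 p2) ->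
  exists lo hi, [/\ pure_nash lo, pure_nash hi & f lo.1 lo.2 < f hi.1 hi.2].
Proof.
case=> v [w [nvw [/pp_value_pure [c [Nc Ev]] /pp_value_pure [e [Ne Ew]]]]].
subst v w.
case: (ltgtP (f c.1 c.2) (f e.1 e.2)) => [lt|gt|eq] //.
- by exists c, e.
- by exists e, c.
Qed.

(* The worse, for f, of lo and another equilibrium punishes strictly below the
   average of hi and that equilibrium. *)
Lemma punishment (f : A1 -> A2 -> R) (lo hi other : A1 * A2) :
  pure_nash lo -> pure_nash other -> f lo.1 lo.2 < f hi.1 hi.2 ->
  exists p, pure_nash p /\ 2 * f p.1 p.2 < f hi.1 hi.2 + f other.1 other.2.
Proof.
move=> Nlo Nother lt; case: (lerP (f lo.1 lo.2) (f other.1 other.2)) => cmp.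
- by exists lo; split => //; lra.
- by exists other; split => //; lra.
Qed.

(* If all pure profiles are equilibria, player 1 is indifferent between all
   actions against any action b, so (p1, b) is a stage equilibrium in (m,p). *)
Lemma indifferent_stageNash_mp (p1 : {ffun A1 -> R}) (b : A2) :
  (forall c, pure_nash c) -> is_dist p1 ->
  stageNash u1 u2 reg_mp p1 (dirac R b).
Proof.
move=> allN p1D.
have const a a' : u1 a b = u1 a' b.
  by apply/eqP; rewrite eq_le (allN (a', b)).1 (allN (a, b)).1.
have Eu_const q a0 : is_dist q -> Eu u1 q (dirac R b) = u1 a0 b.
  case=> _ q1; rewrite Eu_dirac_r.
  by under eq_bigr => a _ do rewrite (const a a0); rewrite -big_distrl /= q1 mul1r.
split => //; first by exists b.
- (* An empty A1 makes both expectations vanish. *)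
  move=> q1 q1D /=; case: (pickP A1) => [a0 _|noA1].
    by rewrite (Eu_const _ a0 q1D) (Eu_const _ a0 p1D).
  by rewrite /Eu !big_pred0.
- move=> q2 [b' ->]; rewrite !Eu_dirac_r; apply: ler_sum => a _.
  exact/ler_wpM2l/(allN (a, b)).2/(p1D.1 a).
Qed.

Lemma mp_LS_non_pure_nash :
  in_GLS u1 u2 reg_mp -> exists x, ~ pure_nash x.
Proof.
case=> T [_ [s1 [s2 [[val1 val2 _] [h [_ notN]]]]]].
apply: not_all_ex_not => allN; apply: notN.
have [b ->] := val2 h; exact: indifferent_stageNash_mp (val1 h).
Qed.

Lemma value_pure (f : A1 -> A2 -> R) (s1 : strat1 R A1 A2)
    (s2 : strat2 R A1 A2) h n (a : A1) (b : A2) :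
  s1 h = dirac R a -> s2 h = dirac R b ->
  value f s1 s2 h n.+1 = f a b + value f s1 s2 (rcons h (a, b)) n.
Proof.
move=> /= -> ->.
under eq_bigr => a1 _ do (under eq_bigr => a2 _ do rewrite -mulrA;
   rewrite -big_distrr /= sum_dirac).
by rewrite sum_dirac.
Qed.

Lemma patience (A : finType) (gain : A -> R) (d : R) : 0 < d ->
  exists k : nat, forall k', (k <= k')%N -> forall a, gain a <= k'%:R * d.
Proof.
move=> d_gt0; pose B := \sum_a `|gain a|.
have B_ge0 : 0 <= B by apply: sumr_ge0.
exists (Num.Def.archi_bound (B / d)) => k' lek a.
have gainB : gain a <= B.
  apply: le_trans (ler_norm _) _.
  by rewrite /B (bigD1 a) //= lerDl; apply: sumr_ge0.
have := archi_boundP (divr_ge0 B_ge0 (ltW d_gt0)); rewrite ltr_pdivrMr // => Bk.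
apply: le_trans gainB (le_trans (ltW Bk) _).
by rewrite ler_wpM2r ?ler_nat // ltW.
Qed.

Section Trigger.
Variables (x1 : A1) (x2 : A2) (hi1 hi2 pun1 pun2 : A1 * A2).
Hypotheses (Nhi1 : pure_nash hi1) (Nhi2 : pure_nash hi2).
Hypotheses (Npun1 : pure_nash pun1) (Npun2 : pure_nash pun2).

Definition reward (m : nat) : A1 * A2 := if odd m then hi1 else hi2.

(* The profile played after m rounds when the first-round profile was c:
   punish the sole deviator, reward otherwise. *)
Definition plan (c : A1 * A2) (m : nat) : A1 * A2 :=
  if c.1 == x1 then (if c.2 == x2 then reward m else pun2)
  else (if c.2 == x2 then pun1 else reward m).

Definition trigger (h : history A1 A2) : A1 * A2 :=
  if h is c :: _ then plan c (size h) else (x1, x2).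
Definition trig1 : strat1 R A1 A2 := fun h => dirac R (trigger h).1.
Definition trig2 : strat2 R A1 A2 := fun h => dirac R (trigger h).2.

Lemma plan_nash (c : A1 * A2) (m : nat) : pure_nash (plan c m).
Proof. by rewrite /plan /reward; case: ifP; case: ifP => //; case: ifP. Qed.

Lemma value_trigger (f : A1 -> A2 -> R) c t n :
  value f trig1 trig2 (c :: t) n =
  \sum_(j < n) f (plan c ((size t).+1 + j)).1 (plan c ((size t).+1 + j)).2.
Proof.
elim: n t => [|n IH] t; first by rewrite big_ord0.
rewrite (value_pure _ _ (erefl (trig1 (c :: t))) (erefl (trig2 (c :: t)))).
rewrite rcons_cons IH big_ord_recl addn0 size_rcons; congr (_ + _).
by apply: eq_bigr => j _; rewrite addSnnS.
Qed.

(* Deviations after round 1 never pay: each stage is a pure equilibrium and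
   the continuation does not react to them. *)
Lemma late_deviation1 n (t1 : strat1 R A1 A2) c t : valid1 reg_pp t1 ->
  value u1 t1 trig2 (c :: t) n <= value u1 trig1 trig2 (c :: t) n.
Proof.
move=> val1; elim: n t => [|n IH] t //.
have [a Ea] := val1 (c :: t).
rewrite (value_pure _ _ Ea (erefl (trig2 (c :: t)))).
rewrite (value_pure _ _ (erefl (trig1 (c :: t))) (erefl (trig2 (c :: t)))).
apply: lerD; first exact: (plan_nash _ _).1.
by rewrite !rcons_cons; apply: le_trans (IH _) _; rewrite !value_trigger !size_rcons.
Qed.

Lemma late_deviation2 n (t2 : strat2 R A1 A2) c t : valid2 reg_pp t2 ->
  value u2 trig1 t2 (c :: t) n <= value u2 trig1 trig2 (c :: t) n.
Proof.
move=> val2; elim: n t => [|n IH] t //.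
have [b Eb] := val2 (c :: t).
rewrite (value_pure _ _ (erefl (trig1 (c :: t))) Eb).
rewrite (value_pure _ _ (erefl (trig1 (c :: t))) (erefl (trig2 (c :: t)))).
apply: lerD; first exact: (plan_nash _ _).2.
by rewrite !rcons_cons; apply: le_trans (IH _) _; rewrite !value_trigger !size_rcons.
Qed.

Lemma reward_sum (f : A1 -> A2 -> R) k :
  \sum_(j < k.*2) f (reward (1 + j)).1 (reward (1 + j)).2 =
  (f hi1.1 hi1.2 + f hi2.1 hi2.2) *+ k.
Proof.
elim: k => [|k IH]; first by rewrite big_ord0.
rewrite doubleS !big_ord_recr /= IH /reward /= odd_double /=.
by rewrite mulrSr addrA.
Qed.

Section FirstRound.
Variable k : nat.
(* The loss over 2k punished rounds outweighs each one-shot gain. *)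
Hypothesis deter1 : forall a, u1 a x2 - u1 x1 x2 <=
  k%:R * (u1 hi1.1 hi1.2 + u1 hi2.1 hi2.2 - 2 * u1 pun1.1 pun1.2).
Hypothesis deter2 : forall b, u2 x1 b - u2 x1 x2 <=
  k%:R * (u2 hi1.1 hi1.2 + u2 hi2.1 hi2.2 - 2 * u2 pun2.1 pun2.2).

Lemma first_deviation1 (t1 : strat1 R A1 A2) : valid1 reg_pp t1 ->
  value u1 t1 trig2 [::] (k.*2).+1 <= value u1 trig1 trig2 [::] (k.*2).+1.
Proof.
move=> val1; have [a Ea] := val1 [::].
rewrite (value_pure _ _ Ea (erefl (trig2 [::]))).
rewrite (value_pure _ _ (erefl (trig1 [::])) (erefl (trig2 [::]))) /=.
apply: le_trans (lerD (lexx _) (late_deviation1 _ (a, x2) [::] val1)) _.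
rewrite !value_trigger /=; have [->|nax] := eqVneq a x1; first by [].
rewrite /plan /= !eqxx (negbTE nax) sumr_const card_ord reward_sum.
rewrite -(mulr_natr (u1 pun1.1 pun1.2)) -(mulr_natr (_ + _)) -muln2 natrM.
have := deter1 a; lra.
Qed.

Lemma first_deviation2 (t2 : strat2 R A1 A2) : valid2 reg_pp t2 ->
  value u2 trig1 t2 [::] (k.*2).+1 <= value u2 trig1 trig2 [::] (k.*2).+1.
Proof.
move=> val2; have [b Eb] := val2 [::].
rewrite (value_pure _ _ (erefl (trig1 [::])) Eb).
rewrite (value_pure _ _ (erefl (trig1 [::])) (erefl (trig2 [::]))) /=.
apply: le_trans (lerD (lexx _) (late_deviation2 _ (x1, b) [::] val2)) _.
rewrite !value_trigger /=; have [->|nbx] := eqVneq b x2; first by [].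
rewrite /plan /= !eqxx (negbTE nbx) sumr_const card_ord reward_sum.
rewrite -(mulr_natr (u2 pun2.1 pun2.2)) -(mulr_natr (_ + _)) -muln2 natrM.
have := deter2 b; lra.
Qed.

Lemma trigger_SPE : SPE u1 u2 reg_pp (k.*2).+1 trig1 trig2.
Proof.
split; [by move=> h; eexists | by move=> h; eexists |].
case=> [|c t] _.
- by rewrite subn0; split; [apply: first_deviation1 | apply: first_deviation2].
- by split=> [t1|t2]; [apply: late_deviation1 | apply: late_deviation2].
Qed.

End FirstRound.

Lemma trigger_LS T : ~ pure_nash (x1, x2) -> (0 < T)%N ->
  locally_suboptimal u1 u2 reg_pp T trig1 trig2.
Proof. by move=> notN T_gt0; exists [::]; split=> // /stageNash_pure_nash. Qed.

End Trigger.
End StageGame.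

Theorem mainTheorem10 (R : realType) (A1 A2 : finType)
  (u1 u2 : A1 -> A2 -> R)
  (hA1 : (0 < #|A1|)%N) (hA2 : (0 < #|A2|)%N)
  (hV1 : card_gt1 (V1 u1 u2 reg_pp))
  (hV2 : card_gt1 (V2 u1 u2 reg_pp)) :
  in_GLS u1 u2 reg_mp -> in_GLS u1 u2 reg_pp.
Proof.
move=> /mp_LS_non_pure_nash [[x1 x2] notN].
have [lo1 [hi1 [Nlo1 Nhi1 lt1]]] := pure_nash_spread hV1.
have [lo2 [hi2 [Nlo2 Nhi2 lt2]]] := pure_nash_spread hV2.
have [pun1 [Npun1 loss1]] := punishment Nlo1 Nhi2 lt1.
have [pun2 [Npun2 loss2]] := punishment Nlo2 Nhi1 lt2.
have [k1 deter1] := patience (fun a => u1 a x2 - u1 x1 x2)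
  (d := u1 hi1.1 hi1.2 + u1 hi2.1 hi2.2 - 2 * u1 pun1.1 pun1.2) ltac:(lra).
have [k2 deter2] := patience (fun b => u2 x1 b - u2 x1 x2)
  (d := u2 hi1.1 hi1.2 + u2 hi2.1 hi2.2 - 2 * u2 pun2.1 pun2.2) ltac:(lra).
exists ((k1 + k2).*2).+1; split => //.
exists (trig1 R x1 x2 hi1 hi2 pun1 pun2), (trig2 R x1 x2 hi1 hi2 pun1 pun2); split.
- apply: trigger_SPE => //; [apply: deter1 | apply: deter2];
    by rewrite ?leq_addr ?leq_addl.
- exact: trigger_LS.
Qed.
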